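(* Let $m\ge 2$, $k\ge 2$, $n=km$, and let $O$ be an $n\times m$ sequence design. (a) If $X$ is an $n\times m$ LHD such that $D=(X,O)$ is marginally coupled, then, after some permutation of its rows, $O=(O_1^{T},\ldots,O_k^{T})^{T}$ where each $O_i$ is an $m\times m$ Latin square. (b) Conversely, if after some row permutation $O=(O_1^{T},\ldots,O_k^{T})^{T}$ with each $O_i$ an $m\times m$ Latin square, then there exists an $n\times m$ LHD $X$ such that $(X,O)$ is marginally coupled.
   Context: A sequence design is a matrix each of whose rows is a permutation of $\{1,\ldots,m\}$. An $n\times m$ LHD is a matrix each of whose columns is a permutation of $\{1,\ldots,n\}$. An $m\times m$ Latin square is a matrix each of whose rows and columns is a permutation of $\{1,\ldots,m\}$. For $n=km$, the QS design $D=(X,O)$ (same row indexing) is marginally coupled if $X$ is an LHD and for every column $u$ of $O$, every component $c\in\{1,\ldots,m\}$, and every column $j$ of $X$, the multiset $\{\lfloor (X_{rj}-1)/m\rfloor : O_{ru}=c\}$ equals $\{0,1,\ldots,k-1\}$ (each value exactly once); i.e., for each level of each factor in $O$ the corresponding points of $X$ form a small LHD after collapsing the $n$ levels to $k$ levels. *)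

From mathcomp Require Import all_boot all_order all_algebra all_fingroup.
Set Implicit Arguments. Unset Strict Implicit. Unset Printing Implicit Defensive.

Definition sequence_design (n m : nat) (O : 'M[nat]_(n, m)) : Prop :=
  forall r : 'I_n, perm_eq [seq O r j | j <- enum 'I_m] (iota 1 m).

Definition LHD (n m : nat) (X : 'M[nat]_(n, m)) : Prop :=
  forall j : 'I_m, perm_eq [seq X r j | r <- enum 'I_n] (iota 1 n).

Definition latin_square (m : nat) (L : 'M[nat]_(m, m)) : Prop :=
  (forall r : 'I_m, perm_eq [seq L r j | j <- enum 'I_m] (iota 1 m)) /\
  (forall j : 'I_m, perm_eq [seq L r j | r <- enum 'I_m] (iota 1 m)).

Definition marginally_coupled (k m : nat) (X : 'M[nat]_(k * m, m))
    (O : 'M[nat]_(k * m, m)) : Prop :=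
  LHD X /\
  forall (u : 'I_m) (c : nat) (j : 'I_m), 1 <= c <= m ->
    perm_eq [seq (X r j).-1 %/ m | r <- enum 'I_(k * m) & O r u == c]
            (iota 0 k).

Lemma blk_lt (k m : nat) (i : 'I_k) (a : 'I_m) : i * m + a < k * m.
Proof.
have Hi := ltn_ord i; have Ha := ltn_ord a.
apply: (@leq_trans (i * m + m)); first by rewrite ltn_add2l.
by rewrite -[X in _ + X]mul1n -mulnDl addn1 leq_mul2r Hi orbT.
Qed.

Definition blk (k m : nat) (i : 'I_k) (a : 'I_m) : 'I_(k * m) :=
  Ordinal (blk_lt i a).

Definition stacked_latin (k m : nat) (O : 'M[nat]_(k * m, m)) : Prop :=
  exists s : 'S_(k * m),
    forall i : 'I_k, latin_square (\matrix_(a < m, b < m) O (s (blk i a)) b).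

From mathcomp Require Import all_boot all_order all_algebra all_fingroup.

Set Implicit Arguments.
Unset Strict Implicit.
Unset Printing Implicit Defensive.

(* A column of an LHD X ranks the n = km rows, i.e. it is a
   permutation s of the rows, and collapsing n levels to k levels sends the
   row s t to block t %/ m.  Marginal coupling for a factor u at level c then
   says exactly that every block of m consecutive rows (in the order given by
   s) contains exactly one row with O r u = c; as the blocks have m rows and
   there are m levels, column u of each block is a permutation of 1..m, which
   is the Latin property (rows are permutations because O is a sequence
   design).  Conversely, stacked Latin squares make every column of X equal
   to the ranking s^-1 + 1 work. *)

Lemma perm_iota_inj (T : finType) (f : T -> nat) a n :
  perm_eq [seq f x | x <- enum T] (iota a n) -> injective f.
Proof.
move=> fE; apply/injectiveP.
by rewrite /injectiveb /dinjectiveb (perm_uniq fE) iota_uniq.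
Qed.

Lemma perm_iota_surj (T : finType) (f : T -> nat) a n c :
  perm_eq [seq f x | x <- enum T] (iota a n) -> c \in iota a n ->
  exists x, f x = c.
Proof. by move=> fE; rewrite -(perm_mem fE) => /mapP[x _ ->]; exists x. Qed.

Lemma perm_iota_of_surj (T : finType) (f : T -> nat) a n : #|T| = n ->
  (forall c, c \in iota a n -> exists x, f x = c) ->
  perm_eq [seq f x | x <- enum T] (iota a n).
Proof.
move=> cardT f_surj.
have sub_f : {subset iota a n <= [seq f x | x <- enum T]}.
  by move=> c /f_surj[x <-]; rewrite map_f ?mem_enum.
have size_le : size [seq f x | x <- enum T] <= size (iota a n).
  by rewrite size_map -cardE cardT size_iota.
have [size_f eq_f] := uniq_min_size (iota_uniq a n) sub_f size_le.
rewrite perm_sym uniq_perm ?iota_uniq //.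
by rewrite (uniq_size_uniq (iota_uniq a n) eq_f) size_f.
Qed.

Lemma perm_iota_rank n (f : 'I_n -> nat) :
  perm_eq [seq f r | r <- enum 'I_n] (iota 1 n) ->
  exists s : 'S_n, forall t, f (s t) = t.+1.
Proof.
move=> fE.
have f_range r : 0 < f r <= n.
  have : f r \in iota 1 n by rewrite -(perm_mem fE) map_f ?mem_enum.
  by rewrite mem_iota add1n ltnS.
have rankP r : (f r).-1 < n by case/andP: (f_range r) => f_gt0; rewrite prednK.
pose rank r := Ordinal (rankP r).
have rank_inj : injective rank.
  move=> r r' /(congr1 val) /= eq_r; apply: (perm_iota_inj fE).
  case/andP: (f_range r) => fr_gt0 _; case/andP: (f_range r') => fr'_gt0 _.
  by rewrite -(prednK fr_gt0) -(prednK fr'_gt0) eq_r.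
exists (perm rank_inj)^-1%g => t; set r := _ t.
have rank_r : rank r = t by rewrite -permE permKV.
by case/andP: (f_range r) => fr_gt0 _; rewrite -[in RHS]rank_r /= prednK.
Qed.

Section Blocks.

Variables k m : nat.

Lemma blk_divn (i : 'I_k) (a : 'I_m) : blk i a %/ m = i.
Proof.
have m_gt0 : 0 < m by apply: leq_ltn_trans (ltn_ord a).
by rewrite /= divnMDl // divn_small // addn0.
Qed.

Lemma blkP (t : 'I_(k * m)) : exists i a, t = blk i a.
Proof.
have m_gt0 : 0 < m by case: m t => [|//] t; case: t; rewrite muln0.
have iP : t %/ m < k by rewrite ltn_divLR // ltn_ord.
exists (Ordinal iP), (Ordinal (ltn_pmod t m_gt0)).
by apply: val_inj; rewrite /= -divn_eq.
Qed.

Variable s : 'S_(k * m).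

(* The rows satisfying P, collapsed to k levels, for a column ranking the
   rows by s (see block_levelsE). *)
Definition block_levels (P : pred 'I_(k * m)) : seq nat :=
  [seq (s^-1)%g r %/ m | r <- enum 'I_(k * m) & P r].

Lemma mem_block_levels (P : pred 'I_(k * m)) (i : 'I_k) :
  reflect (exists a, P (s (blk i a))) (val i \in block_levels P).
Proof.
apply: (iffP mapP) => [[r] | [a Pa]].
  rewrite mem_filter => /andP[Pr _] eq_i.
  have [i' [a r_blk]] := blkP ((s^-1)%g r).
  rewrite r_blk blk_divn in eq_i.
  by exists a; rewrite (val_inj eq_i) -r_blk permKV.
exists (s (blk i a)); first by rewrite mem_filter Pa mem_enum.
by rewrite permK blk_divn.
Qed.

Lemma block_levels_ltn (P : pred 'I_(k * m)) x :
  x \in block_levels P -> x < k.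
Proof.
by case/mapP=> r _ ->; have [i [a ->]] := blkP ((s^-1)%g r); rewrite blk_divn.
Qed.

Lemma uniq_block_levels (P : pred 'I_(k * m)) :
  (forall i a a', P (s (blk i a)) -> P (s (blk i a')) -> a = a') ->
  uniq (block_levels P).
Proof.
move=> P_uniq; rewrite map_inj_in_uniq ?(filter_uniq _ (enum_uniq _)) //.
move=> r r'; rewrite !mem_filter => /andP[Pr _] /andP[Pr' _] eq_blk.
apply: (perm_inj (s := (s^-1)%g)).
have [i [a r_blk]] := blkP ((s^-1)%g r).
have [i' [a' r'_blk]] := blkP ((s^-1)%g r').
rewrite r_blk r'_blk !blk_divn in eq_blk *.
rewrite -(val_inj eq_blk) in r'_blk *.
rewrite -(permKV s r) r_blk in Pr; rewrite -(permKV s r') r'_blk in Pr'.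
by rewrite (P_uniq _ _ _ Pr Pr').
Qed.

Lemma perm_block_levels (P : pred 'I_(k * m)) :
  (forall i, exists a, P (s (blk i a))) ->
  (forall i a a', P (s (blk i a)) -> P (s (blk i a')) -> a = a') ->
  perm_eq (block_levels P) (iota 0 k).
Proof.
move=> P_ex P_uniq; apply: uniq_perm; rewrite ?uniq_block_levels ?iota_uniq //.
move=> x; rewrite mem_iota add0n.
apply/idP/idP => [/block_levels_ltn // | x_lt].
by apply/(mem_block_levels P (Ordinal x_lt)).
Qed.

Lemma perm_block_levels_ex (P : pred 'I_(k * m)) :
  perm_eq (block_levels P) (iota 0 k) -> forall i, exists a, P (s (blk i a)).
Proof.
by move=> PE i; apply/mem_block_levels; rewrite (perm_mem PE) mem_iota ltn_ord.
Qed.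

Lemma block_levelsE (X : 'M[nat]_(k * m, m)) j (P : pred 'I_(k * m)) :
  (forall t, X (s t) j = t.+1) ->
  [seq (X r j).-1 %/ m | r <- enum 'I_(k * m) & P r] = block_levels P.
Proof. by move=> XE; apply: eq_map => r; rewrite -{1}(permKV s r) XE. Qed.

End Blocks.

Definition perm_lhd n m (s : 'S_n) : 'M[nat]_(n, m) :=
  \matrix_(r < n, j < m) ((s^-1)%g r).+1.

Lemma perm_lhdE n m (s : 'S_n) t (j : 'I_m) : perm_lhd m s (s t) j = t.+1.
Proof. by rewrite mxE permK. Qed.

Lemma LHD_perm_lhd n m (s : 'S_n) : LHD (perm_lhd m s).
Proof.
move=> j; under eq_map do rewrite mxE.
apply: perm_iota_of_surj; first by rewrite card_ord.
move=> c; rewrite mem_iota add1n ltnS => /andP[c_gt0 c_le].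
have cP : c.-1 < n by rewrite prednK.
by exists (s (Ordinal cP)); rewrite permK /= prednK.
Qed.

Lemma marginally_coupled_stacked_latin k m (X O : 'M[nat]_(k * m, m)) :
  0 < m -> sequence_design O -> marginally_coupled X O -> stacked_latin O.
Proof.
move=> m_gt0 O_seq [X_lhd X_coupled]; pose j0 := Ordinal m_gt0.
have [s XE] := perm_iota_rank (X_lhd j0).
exists s => i; split=> [a | b]; under eq_map do rewrite mxE; first exact: O_seq.
apply: perm_iota_of_surj; first by rewrite card_ord.
move=> c c_in.
have c_range : 1 <= c <= m by move: c_in; rewrite mem_iota add1n ltnS.
have := X_coupled b c j0 c_range.
rewrite (block_levelsE _ XE) => /perm_block_levels_ex/(_ i)[a /eqP Oa].
by exists a.
Qed.

Lemma stacked_latin_coupled k m (O : 'M[nat]_(k * m, m)) :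
  stacked_latin O -> exists X, marginally_coupled X O.
Proof.
case=> s O_latin; exists (perm_lhd m s); split=> [|u c j c_range].
  exact: LHD_perm_lhd.
rewrite (block_levelsE _ (perm_lhdE s ^~ j)).
apply: perm_block_levels => [i | i a a' /eqP Oa /eqP Oa'];
  have [_ col] := O_latin i.
  have c_in : c \in iota 1 m by rewrite mem_iota add1n ltnS.
  have [a] := perm_iota_surj (col u) c_in.
  by rewrite mxE => Oa; exists a; rewrite /= Oa.
by apply: (perm_iota_inj (col u)); rewrite /= !mxE Oa Oa'.
Qed.

Theorem lemma4 (m k : nat) (hm : 2 <= m) (hk : 2 <= k)
    (O : 'M[nat]_(k * m, m)) (hO : sequence_design O) :
  (forall X : 'M[nat]_(k * m, m), marginally_coupled X O -> stacked_latin O) /\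
  (stacked_latin O -> exists X : 'M[nat]_(k * m, m), marginally_coupled X O).
Proof.
have m_gt0 : 0 < m by apply: leq_trans hm.
split=> [X | ]; first exact: marginally_coupled_stacked_latin.
exact: stacked_latin_coupled.
Qed.
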